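(* Let $(H,\sigma)$ be a coquasitriangular Hopf algebra, $X,A\subseteq H$ sub-Hopf algebras, $H_{X,A}=H_{l_X}H_{r_A}\subseteq H^0$, and consider the generalized quantum double $D(H_{X,A}^{\rm cop},X)$ with respect to the evaluation pairing $\langle\varphi,y\rangle=\varphi(y)$ ($\varphi\in H_{X,A}$, $y\in X$). Then the map $\pi:D(H_{X,A}^{\rm cop},X)\to H_{X,A}^{\rm cop}$, $\pi(l_xr_a\otimes y)=l_xr_a\,l_{S^{-1}(y)}$ ($x,y\in X$, $a\in A$), is a Hopf algebra morphism with $\pi\circ i={\rm Id}$, where $i(\varphi)=\varphi\otimes 1$.
   Context: Sweedler notation. A CQT Hopf algebra $(H,\sigma)$ has a convolution invertible bilinear $\sigma:H\otimes H\to k$ with $\sigma(hh',g)=\sigma(h,g_1)\sigma(h',g_2)$, $\sigma(g,hh')=\sigma(g_2,h)\sigma(g_1,h')$, $\sigma(1,h)=\sigma(h,1)=\varepsilon(h)$, $\sigma(h_1,h'_1)h_2h'_2=h'_1h_1\sigma(h_2,h'_2)$; its antipode $S$ is bijective. In the finite dual $H^0$: $l_x=\sigma(-,x)$, $r_a=\sigma(a,-)$, $H_{l_X}=\{l_x\mid x\in X\}$, $H_{r_A}=\{r_a\mid a\in A\}$, and $H_{X,A}=H_{l_X}H_{r_A}=H_{r_A}H_{l_X}$ is a sub-Hopf algebra of $H^0$ (with $l_{xy}=l_yl_x$, $\Delta(l_x)=l_{x_1}\otimes l_{x_2}$, $S(l_x)=l_{S^{-1}(x)}$, $r_{ab}=r_ar_b$,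 $\Delta(r_a)=r_{a_2}\otimes r_{a_1}$, $S(r_a)=r_{S^{-1}(a)}$). For Hopf algebras $U,V$ with bijective antipodes and a pairing $\langle\,,\rangle$, $D(U^{\rm cop},V)$ is the Hopf algebra on $U\otimes V$ with unit $1\otimes1$, multiplication $(m\otimes x)(n\otimes y)=\langle n_3,x_1\rangle\langle S_U^{-1}(n_1),x_3\rangle mn_2\otimes x_2y$ and comultiplication $\Delta(m\otimes x)=(m_2\otimes x_1)\otimes(m_1\otimes x_2)$ (subscripts in $U$, $V$); here $U=H_{X,A}$, $V=X$. *)

(* A minimal, honest framework for Hopf algebras over a
   field k, with comultiplication given by (representatives of) elements of
   H ⊗ H as finite lists of pairs; tensor equality is the universal property
   of the tensor product (equality under every bilinear map). *)
From HB Require Import structures.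
From mathcomp Require Import all_boot all_order all_algebra.
From Stdlib Require List.
Set Implicit Arguments.
Unset Strict Implicit.
Unset Printing Implicit Defensive.
Import GRing.Theory.
Local Open Scope ring_scope.

Definition linf {k : fieldType} {V : lmodType k} (f : V -> k) : Prop :=
  forall a u v, f (a *: u + v) = a * f u + f v.

Definition bilinf {k : fieldType} {V : lmodType k} (s : V -> V -> k) : Prop :=
  (forall a u u' v, s (a *: u + u') v = a * s u v + s u' v) /\
  (forall a u v v', s u (a *: v + v') = a * s u v + s u v').

Definition bilin {k : fieldType} {V W : lmodType k} (B : V -> V -> W) : Prop :=
  (forall a u u' v, B (a *: u + u') v = a *: B u v + B u' v) /\
  (forall a u v v', B u (a *: v + v') = a *: B u v + B u v').

Definition trilin {k : fieldType} {V W : lmodType k} (T : V -> V -> V -> W) : Prop :=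
  [/\ (forall a u u' v w, T (a *: u + u') v w = a *: T u v w + T u' v w),
      (forall a u v v' w, T u (a *: v + v') w = a *: T u v w + T u v' w) &
      (forall a u v w w', T u v (a *: w + w') = a *: T u v w + T u v w')].

(* equality of the elements  sum_i s_i.1 ⊗ s_i.2  and  sum_j t_j.1 ⊗ t_j.2
   of V ⊗ V (universal property of the tensor product) *)
Definition teq2 {k : fieldType} {V : lmodType k} (s t : seq (V * V)) : Prop :=
  forall (W : lmodType k) (B : V -> V -> W), bilin B ->
    \sum_(p <- s) B p.1 p.2 = \sum_(p <- t) B p.1 p.2.

Definition teq3 {k : fieldType} {V : lmodType k} (s t : seq (V * V * V)) : Prop :=
  forall (W : lmodType k) (T : V -> V -> V -> W), trilin T ->
    \sum_(p <- s) T p.1.1 p.1.2 p.2 = \sum_(p <- t) T p.1.1 p.1.2 p.2.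

(* (H, cm, eps, S) is a Hopf algebra over k; cm h is a representative
   sum_i (h_i1 ⊗ h_i2) of Δ(h) ∈ H ⊗ H (Sweedler: h_1 ⊗ h_2). *)
Record is_hopf {k : fieldType} {H : algType k}
    (cm : H -> seq (H * H)) (eps : H -> k) (S : H -> H) : Prop := {
  cm_lin : forall a u v,
    teq2 (cm (a *: u + v)) ([seq (a *: p.1, p.2) | p <- cm u] ++ cm v);
  cm_1 : teq2 (cm 1) [:: (1, 1)];
  cm_mul : forall u v,
    teq2 (cm (u * v)) [seq (p.1 * q.1, p.2 * q.2) | p <- cm u, q <- cm v];
  cm_coassoc : forall h,
    teq3 [seq (q.1, q.2, p.2) | p <- cm h, q <- cm p.1]
         [seq (p.1, q.1, q.2) | p <- cm h, q <- cm p.2];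
  eps_lin : linf eps;
  eps_1 : eps 1 = 1;
  eps_mul : forall u v, eps (u * v) = eps u * eps v;
  counitl : forall h, \sum_(p <- cm h) eps p.1 *: p.2 = h;
  counitr : forall h, \sum_(p <- cm h) eps p.2 *: p.1 = h;
  S_lin : forall a u v, S (a *: u + v) = a *: S u + S v;
  antipodel : forall h, \sum_(p <- cm h) S p.1 * p.2 = eps h *: 1;
  antipoder : forall h, \sum_(p <- cm h) p.1 * S p.2 = eps h *: 1 }.

Record is_cqt {k : fieldType} {H : algType k}
    (cm : H -> seq (H * H)) (eps : H -> k) (sigma : H -> H -> k) : Prop := {
  cqt_bilin : bilinf sigma;
  cqt_inv : exists tau : H -> H -> k, bilinf tau /\
    (forall h g,
      \sum_(p <- cm h) \sum_(q <- cm g) sigma p.1 q.1 * tau p.2 q.2 = eps h * eps g /\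
      \sum_(p <- cm h) \sum_(q <- cm g) tau p.1 q.1 * sigma p.2 q.2 = eps h * eps g);
  cqt_mull : forall h h' g,
    sigma (h * h') g = \sum_(q <- cm g) sigma h q.1 * sigma h' q.2;
  cqt_mulr : forall g h h',
    sigma g (h * h') = \sum_(q <- cm g) sigma q.2 h * sigma q.1 h';
  cqt_unit : forall h, sigma 1 h = eps h /\ sigma h 1 = eps h;
  cqt_comm : forall h h',
    \sum_(p <- cm h) \sum_(q <- cm h') sigma p.1 q.1 *: (p.2 * q.2) =
    \sum_(p <- cm h) \sum_(q <- cm h') sigma p.2 q.2 *: (q.1 * p.1) }.

Record sub_hopf {k : fieldType} {H : algType k}
    (cm : H -> seq (H * H)) (S Sinv : H -> H) (P : H -> Prop) : Prop := {
  sh_1 : P 1;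
  sh_lin : forall a u v, P u -> P v -> P (a *: u + v);
  sh_mul : forall u v, P u -> P v -> P (u * v);
  sh_cm : forall u, P u -> exists s : seq (H * H),
            (forall p, List.In p s -> P p.1 /\ P p.2) /\ teq2 s (cm u);
  sh_S : forall u, P u -> P (S u);
  sh_Sinv : forall u, P u -> P (Sinv u) }.

(* product of H^0 (convolution):  (f g)(h) = f(h_1) g(h_2) *)
Definition conv {k : fieldType} {H : algType k} (cm : H -> seq (H * H))
    (f g : H -> k) : H -> k :=
  fun h => \sum_(p <- cm h) f p.1 * g p.2.

Definition lfun {k : fieldType} {H : algType k} (sigma : H -> H -> k) (x : H)
  : H -> k := fun h => sigma h x.
Definition rfun {k : fieldType} {H : algType k} (sigma : H -> H -> k) (a : H)
  : H -> k := fun h => sigma a h.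

(* membership in H_{X,A} = H_{l_X} H_{r_A} (span of the products l_x r_a) *)
Definition inHXA {k : fieldType} {H : algType k} (cm : H -> seq (H * H))
    (sigma : H -> H -> k) (X A : H -> Prop) (f : H -> k) : Prop :=
  exists l : seq (H * H), (forall p, List.In p l -> X p.1 /\ A p.2) /\
    forall h, f h = \sum_(p <- l) conv cm (lfun sigma p.1) (rfun sigma p.2) h.

(* Δ(f) = sum_i s_i.1 ⊗ s_i.2 in H^0 ⊗ H^0 with components in U :
   f(a b) = sum_i s_i.1(a) s_i.2(b) *)
Definition dual_cm_rep {k : fieldType} {H : algType k} (U : (H -> k) -> Prop)
    (f : H -> k) (s : seq ((H -> k) * (H -> k))) : Prop :=
  (forall p, List.In p s -> U p.1 /\ U p.2) /\
  forall a b, f (a * b) = \sum_(p <- s) p.1 a * p.2 b.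

(* An element sum_i t_i.1 ⊗ t_i.2 of H_{X,A} ⊗ X is represented by a list t. *)
Definition inD {k : fieldType} {H : algType k} (cm : H -> seq (H * H))
    (sigma : H -> H -> k) (X A : H -> Prop) (t : seq ((H -> k) * H)) : Prop :=
  forall p, List.In p t -> inHXA cm sigma X A p.1 /\ X p.2.

Definition delta2 {k : fieldType} {H : algType k} (cm : H -> seq (H * H)) (h : H)
  : seq (H * H * H) := [seq (q.1, q.2, p.2) | p <- cm h, q <- cm p.1].

(* multiplication of D:
   (m ⊗ x)(n ⊗ y) = <n_3, x_1> <S_U^{-1}(n_1), x_3> m n_2 ⊗ x_2 y,
   where the pairing is evaluation and S_U^{-1}(φ) = φ ∘ S^{-1}, so that
   sum_(n) <n_3,x_1><S_U^{-1}(n_1),x_3> n_2 = (h |-> n(S^{-1}(x_3) h x_1)). *)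
Definition mulD {k : fieldType} {H : algType k} (cm : H -> seq (H * H))
    (Sinv : H -> H) (t t' : seq ((H -> k) * H)) : seq ((H -> k) * H) :=
  flatten [seq flatten [seq
     [seq (conv cm p.1 (fun h => q.1 (Sinv r.2 * h * r.1.1)), r.1.2 * q.2)
        | r <- delta2 cm p.2]
     | q <- t'] | p <- t].

(* comultiplication of D: Δ(m ⊗ x) = (m_2 ⊗ x_1) ⊗ (m_1 ⊗ x_2),
   given representatives dm f of Δ_{H_{X,A}}(f) = f_1 ⊗ f_2 *)
Definition deltaD {k : fieldType} {H : algType k} (cm : H -> seq (H * H))
    (dm : (H -> k) -> seq ((H -> k) * (H -> k))) (t : seq ((H -> k) * H))
  : seq (((H -> k) * H) * ((H -> k) * H)) :=
  flatten [seq [seq ((r.2, q.1), (r.1, q.2)) | r <- dm p.1, q <- cm p.2] | p <- t].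

(* the map π : D → H_{X,A}^cop,  π(φ ⊗ y) = φ l_{S^{-1}(y)}, extended linearly
   (on the spanning elements φ = l_x r_a this is the paper's formula) *)
Definition piD {k : fieldType} {H : algType k} (cm : H -> seq (H * H))
    (sigma : H -> H -> k) (Sinv : H -> H) (t : seq ((H -> k) * H)) : H -> k :=
  fun h => \sum_(p <- t) conv cm p.1 (lfun sigma (Sinv p.2)) h.

(* The map π(φ ⊗ y) = φ l_{S^{-1}(y)} lands in H_{X,A} because the braiding rule of σ
   rewrites every product r_a l_z as a combination of products l_{z'} r_{a'}.  It is
   multiplicative because the same rule, tested against S^{-1}, absorbs the twisting
   factor <n_3, x_1><S^{-1}(n_1), x_3> of the product of D when n_2 is moved past
   l_{S^{-1}(x)}.  It is comultiplicative because σ(ab, w) = σ(a, w_1) σ(b, w_2) and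
   S^{-1} reverses the coproduct; unit, counit and π ∘ i = Id come from
   σ(1, -) = σ(-, 1) = ε. *)

From HB Require Import structures.
From mathcomp Require Import all_boot all_order all_algebra.
From Stdlib Require List.
From mathcomp Require Import ring.
Import GRing.Theory.
Local Open Scope ring_scope.

Section LinearMaps.
Context {k : fieldType} {U V W : lmodType k}.

Lemma linear_map0 (f : U -> W) : linear f -> f 0 = 0.
Proof.
move=> Lf; have := Lf 1 0 0; rewrite !scale1r addr0 => e.
by apply: (addrI (f 0)); rewrite addr0 -e.
Qed.

Lemma linear_mapD (f : U -> W) u v : linear f -> f (u + v) = f u + f v.
Proof. by move=> Lf; apply: (GRing.semilinear_linear Lf).2. Qed.

Lemma linear_mapZ (f : U -> W) a u : linear f -> f (a *: u) = a *: f u.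
Proof. by move=> Lf; apply: (scalable_linear Lf). Qed.

Lemma linear_map_sum (f : U -> W) I (s : seq I) (g : I -> U) : linear f ->
  f (\sum_(i <- s) g i) = \sum_(i <- s) f (g i).
Proof.
move=> Lf; elim: s => [|x s IH]; first by rewrite !big_nil linear_map0.
by rewrite !big_cons linear_mapD // IH.
Qed.

Lemma linear_sum_fun I (s : seq I) (F : I -> U -> W) :
  (forall i, linear (F i)) -> linear (fun x => \sum_(i <- s) F i x).
Proof.
move=> LF a u v; rewrite (eq_bigr _ (fun i _ => LF i a u v)).
by rewrite big_split /= scaler_sumr.
Qed.

Lemma linear_scale_fun (f : U -> W) c : linear f -> linear (fun x => c *: f x).
Proof. by move=> Lf a u v; rewrite Lf scalerDr !scalerA mulrC. Qed.

Lemma linear_id_fun : linear (fun x : U => x).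
Proof. by []. Qed.

Lemma linear_comp_fun (f : V -> W) (g : U -> V) :
  linear g -> linear f -> linear (fun x => f (g x)).
Proof. by move=> Lg Lf a u v; rewrite Lg Lf. Qed.

Lemma bilin_linl (B : U -> U -> W) v : bilin B -> linear (B^~ v).
Proof. by case=> Bl _ a u u'; apply: Bl. Qed.

Lemma bilinP (B : U -> U -> W) :
  (forall v, linear (B^~ v)) -> (forall u, linear (B u)) -> bilin B.
Proof. by move=> Bl Br; split=> *; [apply: Bl|apply: Br]. Qed.

Lemma trilinP (T : U -> U -> U -> W) :
  (forall b c, linear (fun a => T a b c)) ->
  (forall a c, linear (fun b => T a b c)) ->
  (forall a b, linear (fun c => T a b c)) -> trilin T.
Proof. by move=> T1 T2 T3; split=> *; [apply: T1|apply: T2|apply: T3]. Qed.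

End LinearMaps.

Section AlgebraMaps.
Context {k : fieldType} {U : lmodType k} {A : algType k}.

Lemma linear_mulr_fun (f : U -> A) c : linear f -> linear (fun x => f x * c).
Proof. by move=> Lf a u v; rewrite Lf mulrDl scalerAl. Qed.

Lemma linear_mull_fun (f : U -> A) c : linear f -> linear (fun x => c * f x).
Proof. by move=> Lf a u v; rewrite Lf mulrDr scalerAr. Qed.

End AlgebraMaps.

Section HopfAlgebra.
Context {k : fieldType} {H : algType k}.
Context {cm : H -> seq (H * H)} {eps : H -> k} {S : H -> H} (hH : is_hopf cm eps S).
Context {Sinv : H -> H} (SK : cancel S Sinv) (SinvK : cancel Sinv S).

Lemma linear_S : linear S.
Proof. exact: hH.(S_lin). Qed.

Definition sw {W : lmodType k} (h : H) (F : H -> H -> W) : W :=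
  \sum_(p <- cm h) F p.1 p.2.

Section SweedlerSums.
Context {W : lmodType k}.
Implicit Types F : H -> H -> W.

Lemma sw_rep F h s : teq2 s (cm h) -> bilin F -> \sum_(p <- s) F p.1 p.2 = sw h F.
Proof. by move=> e BF; apply: e. Qed.

Lemma eq_sw {F G h} : (forall a b, F a b = G a b) -> sw h F = sw h G.
Proof. by move=> e; apply: eq_bigr => p _; apply: e. Qed.

Lemma linear_sw F : bilin F -> linear (fun h => sw h F).
Proof.
move=> BF a u v; rewrite /sw (hH.(cm_lin) a u v BF) big_cat big_map /=.
congr (_ + _); rewrite scaler_sumr; apply: eq_bigr => p _.
by rewrite (linear_mapZ _ _ _ (bilin_linl _ _ BF)).
Qed.

Lemma linear_sw_fun (f : H -> H) F : linear f -> bilin F -> linear (fun x => sw (f x) F).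
Proof. by move=> Lf BF a u v; rewrite Lf linear_sw. Qed.

Lemma linear_sw_integrand (h : H) (F : H -> H -> H -> W) :
  (forall a b, linear (fun x => F x a b)) -> linear (fun x => sw h (F x)).
Proof. by move=> LF; apply: linear_sum_fun => p; apply: LF. Qed.

Lemma sw_mul F u v : bilin F ->
  sw (u * v) F = sw u (fun a b => sw v (fun c d => F (a * c) (b * d))).
Proof. by move=> BF; rewrite /sw (hH.(cm_mul) u v BF) big_allpairs_dep. Qed.

Lemma sw1 F : bilin F -> sw 1 F = F 1 1.
Proof. by move=> BF; rewrite /sw (hH.(cm_1) BF) big_cons big_nil addr0. Qed.

Lemma sw_coassoc (T : H -> H -> H -> W) h : trilin T ->
  sw h (fun a b => sw a (fun c d => T c d b)) =
  sw h (fun a b => sw b (fun c d => T a c d)).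
Proof. by move=> TT; have := hH.(cm_coassoc) h TT; rewrite !big_allpairs_dep. Qed.

Lemma exchange_sw h g (F : H -> H -> H -> H -> W) :
  sw h (fun a b => sw g (fun c d => F a b c d)) =
  sw g (fun c d => sw h (fun a b => F a b c d)).
Proof. exact: exchange_big. Qed.

Lemma sw_counitl (G : H -> W) F h :
  linear G -> (forall a b, F a b = eps a *: G b) -> sw h F = G h.
Proof.
move=> LG e; rewrite (eq_sw e) -{2}(hH.(counitl) h) linear_map_sum //.
by apply: eq_bigr => p _; rewrite linear_mapZ.
Qed.

Lemma sw_counitr (G : H -> W) F h :
  linear G -> (forall a b, F a b = eps b *: G a) -> sw h F = G h.
Proof.
move=> LG e; rewrite (eq_sw e) -{2}(hH.(counitr) h) linear_map_sum //.
by apply: eq_bigr => p _; rewrite linear_mapZ.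
Qed.

Lemma sw_antipodel (G : H -> W) F h :
  linear G -> (forall a b, F a b = G (S a * b)) -> sw h F = eps h *: G 1.
Proof.
by move=> LG e; rewrite (eq_sw e) -linear_mapZ // -(hH.(antipodel) h) linear_map_sum.
Qed.

Lemma sw_antipoder (G : H -> W) F h :
  linear G -> (forall a b, F a b = G (a * S b)) -> sw h F = eps h *: G 1.
Proof.
by move=> LG e; rewrite (eq_sw e) -linear_mapZ // -(hH.(antipoder) h) linear_map_sum.
Qed.

End SweedlerSums.

Lemma linear_Sinv : linear Sinv.
Proof. by move=> a u v; apply: (can_inj SK); rewrite SinvK linear_S !SinvK. Qed.

(* Scalar-valued maps and Sweedler sums take values in the regular module k^o, where
   *: is the product of k; the rules stated with *: are restated below with *. *)
Local Notation linear_form f := (linear (f : H -> k^o)).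
Local Notation sws := (@sw k^o).
Local Notation eq_sws := (@eq_sw k^o _ _ _).
Local Notation exchange_sws := (@exchange_sw k^o).
Local Notation sws_coassoc := (@sw_coassoc k^o).
Local Notation sws_mul := (@sw_mul k^o).
Local Notation sws1 := (@sw1 k^o).

Lemma sws_counitl (G : H -> k) F h :
  linear_form G -> (forall a b, F a b = eps a * G b) -> sws h F = G h.
Proof. exact: (@sw_counitl k^o G F h). Qed.

Lemma sws_counitr (G : H -> k) F h :
  linear_form G -> (forall a b, F a b = eps b * G a) -> sws h F = G h.
Proof. exact: (@sw_counitr k^o G F h). Qed.

Lemma sws_antipodel (G : H -> k) F h :
  linear_form G -> (forall a b, F a b = G (S a * b)) -> sws h F = eps h * G 1.
Proof. exact: (@sw_antipodel k^o G F h). Qed.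

Lemma sws_antipoder (G : H -> k) F h :
  linear_form G -> (forall a b, F a b = G (a * S b)) -> sws h F = eps h * G 1.
Proof. exact: (@sw_antipoder k^o G F h). Qed.

Lemma mulr_swr c (F : H -> H -> k) h : c * sws h F = sws h (fun a b => c * F a b).
Proof. by rewrite /sw mulr_sumr. Qed.

Lemma mulr_swl c (F : H -> H -> k) h : sws h F * c = sws h (fun a b => F a b * c).
Proof. by rewrite /sw mulr_suml. Qed.

Lemma linear_form_mulr (f : H -> k) c : linear_form f -> linear_form (fun x => f x * c).
Proof. by move=> Lf a u v; rewrite Lf mulrDl -mulrA. Qed.

Lemma linear_form_mull (f : H -> k) c : linear_form f -> linear_form (fun x => c * f x).
Proof. by move=> Lf a u v; rewrite Lf mulrDr mulrA [c * a]mulrC -mulrA. Qed.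

Lemma linear_form_eps (f : H -> H) : linear f -> linear_form (fun x => eps (f x)).
Proof. by move=> Lf a u v; rewrite Lf hH.(eps_lin). Qed.

Lemma linear_form_bilinfl (s : H -> H -> k) (f : H -> H) c :
  bilinf s -> linear f -> linear_form (fun x => s (f x) c).
Proof. by case=> sl _ Lf a u v; rewrite Lf sl. Qed.

Lemma linear_form_bilinfr (s : H -> H -> k) (f : H -> H) c :
  bilinf s -> linear f -> linear_form (fun x => s c (f x)).
Proof. by case=> _ sr Lf a u v; rewrite Lf sr. Qed.

Lemma linear_form_lfun (s : H -> H -> k) x : bilinf s -> linear_form (lfun s x).
Proof. by case=> sl _ a u v; apply: sl. Qed.

Lemma linear_form_rfun (s : H -> H -> k) x : bilinf s -> linear_form (rfun s x).
Proof. by case=> _ sr a u v; apply: sr. Qed.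

Lemma linear_form_conv (f g : H -> k) :
  linear_form f -> linear_form g -> linear_form (conv cm f g).
Proof.
move=> Lf Lg; apply: (@linear_sw k^o (fun a b => f a * g b)).
by apply: bilinP => [v|u]; [apply: linear_form_mulr|apply: linear_form_mull].
Qed.

Lemma linear_form_conv_integrand (f : H -> k) (G : H -> H -> k) h :
  (forall y, linear_form (fun x => G x y)) -> linear_form (fun x => conv cm f (G x) h).
Proof.
move=> LG; apply: (@linear_sw_integrand k^o h (fun x a b => f a * G x b)) => a b.
exact: linear_form_mull.
Qed.

Lemma bilinfP (B : H -> H -> k) :
  (forall v, linear_form (B^~ v)) -> (forall u, linear_form (B u)) -> bilinf B.
Proof. exact: (bilinP (W:=k^o)). Qed.

Ltac linearity := repeat (cbv beta; first
  [ exact: linear_id_fun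
  | apply: linear_sw_integrand
  | apply: linear_sw_fun
  | apply: linear_mulr_fun
  | apply: linear_mull_fun
  | apply: linear_form_mulr
  | apply: linear_form_eps
  | apply: linear_form_bilinfl; [first [eassumption|eapply cqt_bilin; eassumption]|]
  | apply: linear_form_bilinfr; [first [eassumption|eapply cqt_bilin; eassumption]|]
  | apply: linear_comp_fun; [|first [exact: linear_S|exact: linear_Sinv|eassumption]]
  | apply: linear_form_conv
  | apply: linear_form_conv_integrand
  | apply: linear_form_rfun; eapply cqt_bilin; eassumption
  | apply: linear_scale_fun
  | apply: bilinP
  | apply: bilinfP
  | apply: trilinP
  | eassumption
  | intro ]).

Lemma antipode1 : S 1 = 1.
Proof.
have := hH.(antipodel) 1; rewrite hH.(eps_1) scale1r.
by rewrite -[LHS]/(sw 1 (fun a b => S a * b)) sw1 ?mulr1 //; linearity.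
Qed.

Lemma counit_antipode h : eps (S h) = eps h.
Proof.
rewrite -(sws_counitr (fun x => eps (S x)) (fun a b => eps (S a * b))); last 2 first.
- by linearity.
- by move=> a b; rewrite hH.(eps_mul) mulrC.
by rewrite (sws_antipodel eps (fun a b => eps (S a * b))) ?(eps_1 hH) ?mulr1 //; linearity.
Qed.

Lemma antipodeM u v : S (u * v) = S v * S u.
Proof.
(* Both sides equal P = S(u_1 v_1) u_2 v_2 S(v_3) S(u_3): contract v_2 S(v_3) and
   u_2 S(u_3), or contract S(u_1 v_1) u_2 v_2. *)
pose R u1 u2 u3 v1 v2 v3 := S (u1 * v1) * (u2 * v2) * S v3 * S u3.
pose Q u1 u2 u3 := sw v (fun v1 v' => sw v' (fun v2 v3 => R u1 u2 u3 v1 v2 v3)).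
have trQ : trilin Q by rewrite /Q /R; linearity.
pose P := sw u (fun u1 u' => sw u' (fun u2 u3 => Q u1 u2 u3)).
have -> : S (u * v) = P.
  have Q_eq u1 u2 u3 : Q u1 u2 u3 = S (u1 * v) * u2 * S u3.
    rewrite /Q (sw_counitr (fun x => S (u1 * x) * u2 * S u3)); [by []|by linearity|].
    move=> v1 v'; rewrite (sw_antipoder (fun w => S (u1 * v1) * u2 * w * S u3)).
    - by rewrite mulr1.
    - by linearity.
    - by move=> a b; rewrite /R !mulrA.
  symmetry; rewrite /P (sw_counitr (fun x => S (x * v))); [by []|by linearity|].
  move=> u1 u'; under eq_sw => u2 u3 do rewrite Q_eq.
  rewrite (sw_antipoder (fun w => S (u1 * v) * w)) ?mulr1 //; first by linearity.
  by move=> *; rewrite mulrA.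
rewrite /P -(sw_coassoc Q) //.
have Q_coassoc u1 u2 u3 : Q u1 u2 u3 =
    sw v (fun v' v3 => sw v' (fun v1 v2 => R u1 u2 u3 v1 v2 v3)).
  by rewrite /Q -(sw_coassoc (R u1 u2 u3)) //; rewrite /R; linearity.
under eq_sw => u' u3 do under eq_sw => u1 u2 do rewrite Q_coassoc.
rewrite (sw_counitl (fun x => S v * S x)); [by []|by linearity|].
move=> u' u3; rewrite exchange_sw.
rewrite (sw_counitl (fun x => eps u' *: (S x * S u3))); [|by linearity|].
  by rewrite scalerAr.
move=> v' v3; rewrite -(sw_mul (fun a b => S a * b * S v3 * S u3)); last by linearity.
rewrite (sw_antipodel (fun w => w * S v3 * S u3)) //; last by linearity.
by rewrite hH.(eps_mul) mul1r mulrC -scalerA.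
Qed.

Lemma sws_counit_insert (B : H -> H -> k) c d g : bilinf B ->
  eps g * B c d = sws g (fun u z => sws u (fun g1 g2 => sws z (fun g3 g4 =>
      B (c * g1 * S g4) (d * g2 * S g3)))).
Proof.
move=> BB.
rewrite (sw_coassoc (fun g1 g2 z => sws z (fun g3 g4 => B (c * g1 * S g4) (d * g2 * S g3))));
  last by linearity.
under eq_sw => g1 y.
  rewrite -(sws_coassoc (fun g2 g3 g4 => B (c * g1 * S g4) (d * g2 * S g3))); last by linearity.
  under eq_sw => v g4.
    rewrite (sws_antipoder (fun w => B (c * g1 * S g4) (d * w)));
      [|by linearity|by move=> *; rewrite mulrA].
    over.
  rewrite (sws_counitl (fun x => B (c * g1 * S x) (d * 1))) //; last by linearity.
  over.
rewrite (sws_antipoder (fun w => B (c * w) (d * 1))); [|by linearity|by move=> *; rewrite mulrA].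
by rewrite !mulr1.
Qed.

Lemma sws_antipode (B : H -> H -> k) h : bilinf B ->
  sws (S h) B = sws h (fun a b => B (S b) (S a)).
Proof.
move=> BB.
rewrite -(sws_counitr (fun x => sws (S x) B) (fun h1 h' => eps h' * sws (S h1) B)) //; last first.
  by apply: linear_sw_fun => //; exact: linear_S.
under eq_sw => h1 h'.
  rewrite mulr_swr.
  under eq_sw => a1 a2 do rewrite (sws_counit_insert _ a1 a2 h' BB).
  rewrite exchange_sw.
  over.
pose T h1 u z := sws (S h1) (fun a1 a2 => sws u (fun g1 g2 => sws z (fun g3 g4 =>
      B (a1 * g1 * S g4) (a2 * g2 * S g3)))).
rewrite -(sw_coassoc T); last by rewrite /T; linearity.
under eq_sw => w z.
  under eq_sw => h1 u.
    rewrite /T -(sw_mul (fun c d => sws z (fun g3 g4 => B (c * S g4) (d * S g3))));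
      last by linearity.
    over.
  rewrite (sws_antipodel (fun x => sws x (fun c d => sws z (fun g3 g4 => B (c * S g4) (d * S g3)))))
    //; last by linearity.
  rewrite sw1; last by linearity.
  over.
rewrite (sws_counitl (fun z => sws z (fun g3 g4 => B (1 * S g4) (1 * S g3)))) //; last by linearity.
by apply: eq_sw => a b; rewrite !mul1r.
Qed.

Lemma sws_Sinv (B : H -> H -> k) h : bilinf B ->
  sws (Sinv h) B = sws h (fun a b => B (Sinv b) (Sinv a)).
Proof.
move=> BB; rewrite -{2}(SinvK h) sws_antipode; last by linearity.
by apply: eq_sws => a b; rewrite !SK.
Qed.

Lemma SinvM u v : Sinv (u * v) = Sinv v * Sinv u.
Proof. by apply: (can_inj SK); rewrite antipodeM !SinvK. Qed.

Lemma Sinv1 : Sinv 1 = 1.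
Proof. by rewrite -{1}antipode1 SK. Qed.

Lemma counit_Sinv h : eps (Sinv h) = eps h.
Proof. by rewrite -{2}(SinvK h) counit_antipode. Qed.

Lemma convE (f g : H -> k) h : conv cm f g h = sws h (fun a b => f a * g b).
Proof. by []. Qed.

Lemma conv_sumr I (s : seq I) (f : H -> k) (G : I -> H -> k) h :
  conv cm f (fun w => \sum_(i <- s) G i w) h = \sum_(i <- s) conv cm f (G i) h.
Proof. by rewrite /conv; under eq_bigr => p _ do rewrite mulr_sumr; exact: exchange_big. Qed.

Lemma conv_suml I (s : seq I) (g : H -> k) (G : I -> H -> k) h :
  conv cm (fun w => \sum_(i <- s) G i w) g h = \sum_(i <- s) conv cm (G i) g h.
Proof. by rewrite /conv; under eq_bigr => p _ do rewrite mulr_suml; exact: exchange_big. Qed.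

Lemma eq_conv (f f' g g' : H -> k) h : f =1 f' -> g =1 g' ->
  conv cm f g h = conv cm f' g' h.
Proof. by move=> e1 e2; apply: eq_bigr => p _; rewrite e1 e2. Qed.

Lemma convA (f g g' : H -> k) h : linear_form f -> linear_form g -> linear_form g' ->
  conv cm (conv cm f g) g' h = conv cm f (conv cm g g') h.
Proof.
move=> Lf Lg Lg'; rewrite !convE.
under eq_sw => a b do rewrite convE mulr_swl.
rewrite (sws_coassoc (fun c d b => f c * g d * g' b)); last by linearity.
by apply: eq_sws => a b; rewrite convE mulr_swr; apply: eq_sws => c d; rewrite mulrA.
Qed.

Lemma sub_hopf0 P : sub_hopf cm S Sinv P -> P 0.
Proof.
move=> hP; have := hP.(sh_lin) (-1) hP.(sh_1) hP.(sh_1).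
by rewrite scaleN1r addNr.
Qed.

Section Coquasitriangular.
Context {sigma : H -> H -> k} (hsig : is_cqt cm eps sigma).

Lemma lfunM u v h : lfun sigma (u * v) h = conv cm (lfun sigma v) (lfun sigma u) h.
Proof. by rewrite /lfun hsig.(cqt_mulr) /conv; apply: eq_bigr => p _; rewrite mulrC. Qed.

Lemma lfun1 h : lfun sigma 1 h = eps h.
Proof. by rewrite /lfun (hsig.(cqt_unit) h).2. Qed.

Lemma cqt_comm_form (m : H -> k) h y : linear_form m ->
  sws h (fun c1 c2 => sws y (fun q1 q2 => sigma c1 q1 * m (c2 * q2))) =
  sws h (fun c1 c2 => sws y (fun q1 q2 => sigma c2 q2 * m (q1 * c1))).
Proof.
move=> Lm; have := congr1 m (hsig.(cqt_comm) h y).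
have m_sum := linear_map_sum (W:=k^o) m; have m_scale := linear_mapZ (W:=k^o) m.
rewrite !m_sum //.
under eq_bigr => p _ do rewrite m_sum //.
under [in RHS]eq_bigr => p _ do rewrite m_sum //.
under eq_bigr => p _ do under eq_bigr => q _ do rewrite m_scale //.
by under [in RHS]eq_bigr => p _ do under eq_bigr => q _ do rewrite m_scale //.
Qed.

Lemma sum_twist_lfun_Sinv (n : H -> k) x h : linear_form n ->
  \sum_(r <- delta2 cm x)
     conv cm (fun w => n (Sinv r.2 * w * r.1.1)) (lfun sigma (Sinv r.1.2)) h
  = conv cm (lfun sigma (Sinv x)) n h.
Proof.
move=> Ln; rewrite /delta2 big_allpairs_dep /=.
change (sws x (fun p1 p2 => sws p1 (fun q1 q2 => sws h (fun c1 c2 =>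
   n (Sinv p2 * c1 * q1) * sigma c2 (Sinv q2)))) = conv cm (lfun sigma (Sinv x)) n h).
rewrite -{1}(SinvK x) sws_antipode; last by linearity.
under eq_sws => a b.
  rewrite sws_antipode; last by linearity.
  under eq_sws => b1 b2 do under eq_sws => c1 c2 do rewrite !SK.
  over.
rewrite -(sws_coassoc (fun s1 s2 s3 => sws h (fun c1 c2 => n (s1 * c1 * S s3) * sigma c2 s2)));
  last by linearity.
under eq_sws => y s3.
  rewrite exchange_sws.
  have Lm : linear_form (fun w => n (w * S s3)) by linearity.
  under eq_sws => c1 c2 do under eq_sws => q1 q2 do rewrite mulrC.
  rewrite -(cqt_comm_form _ h y Lm).
  over.
rewrite exchange_sws convE.
apply: eq_sws => c1 c2.
rewrite (sws_coassoc (fun q1 q2 s3 => sigma c1 q1 * n (c2 * q2 * S s3))); last by linearity.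
rewrite (sws_counitr (fun x => sigma c1 x * n c2)); [by []|by linearity|].
move=> s1 y'; rewrite (sws_antipoder (fun w => sigma c1 s1 * n (c2 * w))).
- by rewrite mulr1.
- by linearity.
- by move=> *; rewrite mulrA.
Qed.

Lemma conv_twist_lfun_Sinv (m n : H -> k) x y h : linear_form m -> linear_form n ->
  \sum_(r <- delta2 cm x) conv cm (conv cm m (fun w => n (Sinv r.2 * w * r.1.1)))
        (lfun sigma (Sinv (r.1.2 * y))) h
  = conv cm (conv cm m (lfun sigma (Sinv x))) (conv cm n (lfun sigma (Sinv y))) h.
Proof.
move=> Lm Ln.
transitivity (\sum_(r <- delta2 cm x) conv cm m (conv cm (conv cm
   (fun w => n (Sinv r.2 * w * r.1.1)) (lfun sigma (Sinv r.1.2))) (lfun sigma (Sinv y))) h).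
  apply: eq_bigr => r _.
  rewrite (eq_conv _ _ _ (conv cm (lfun sigma (Sinv r.1.2)) (lfun sigma (Sinv y))) h (frefl _));
    last first.
    by move=> w; rewrite SinvM lfunM.
  rewrite convA; [|by linearity..].
  by apply: eq_conv => // w; rewrite convA //; linearity.
rewrite -conv_sumr.
rewrite (eq_conv _ _ _ (conv cm (lfun sigma (Sinv x)) (conv cm n (lfun sigma (Sinv y)))) h
  (frefl _)).
  by rewrite convA //; linearity.
move=> w; rewrite -conv_suml -convA; [|by linearity..].
by apply: eq_conv => // v; apply: sum_twist_lfun_Sinv.
Qed.

Lemma conv_lfun_swap (n : H -> k) z h : linear_form n ->
  conv cm n (lfun sigma z) h =
  sws z (fun z1 z' => sws z' (fun z2 z3 =>
    sws h (fun c1 c2 => sigma c1 z2 * n (S z1 * c2 * z3)))).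
Proof.
move=> Ln; symmetry.
under eq_sws => z1 z'.
  rewrite exchange_sws.
  have Lm : linear_form (fun w => n (S z1 * w)) by linearity.
  under eq_sws => c1 c2 do under eq_sws => q1 q2 do rewrite -mulrA.
  rewrite (cqt_comm_form _ h z' Lm).
  over.
rewrite exchange_sws convE; apply: eq_sws => c1 c2.
rewrite -(sws_coassoc (fun z1 q1 q2 => sigma c2 q2 * n (S z1 * (q1 * c1)))); last by linearity.
rewrite (sws_counitl (fun x => sigma c2 x * n c1)); [by rewrite mulrC|by linearity|].
move=> y z3; rewrite (sws_antipodel (fun w => sigma c2 z3 * n (w * c1))).
- by rewrite mul1r.
- by linearity.
- by move=> *; rewrite mulrA.
Qed.

(* r_a l_z = σ(a_22, S z_1) σ(a_1, z_3) l_{z_2} r_{a_21},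
   whence H_{r_A} H_{l_X} ⊆ H_{l_X} H_{r_A}. *)
Lemma conv_rfun_lfun a z h : conv cm (rfun sigma a) (lfun sigma z) h =
  sws z (fun z1 z' => sws z' (fun z2 z3 => sws a (fun a1 a' => sws a' (fun a21 a22 =>
    sigma a22 (S z1) * sigma a1 z3 * sws h (fun c1 c2 => sigma c1 z2 * sigma a21 c2))))).
Proof.
rewrite conv_lfun_swap; last by linearity.
apply: eq_sws => z1 z'; apply: eq_sws => z2 z3.
rewrite /rfun /sw.
under eq_bigr => p _ do rewrite hsig.(cqt_mulr).
under eq_bigr => p _ do under eq_bigr => q _ do rewrite hsig.(cqt_mulr).
transitivity (\sum_(p <- cm h) \sum_(q <- cm a) \sum_(q' <- cm q.2)
   (sigma p.1 z2 * (sigma q'.2 (S z1) * sigma q'.1 p.2) * sigma q.1 z3)).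
  apply: eq_bigr => p _; rewrite mulr_sumr; apply: eq_bigr => q _.
  rewrite mulr_suml mulr_sumr; apply: eq_bigr => q' _; ring.
rewrite exchange_big; apply: eq_bigr => q _.
rewrite exchange_big; apply: eq_bigr => q' _.
rewrite mulr_sumr; apply: eq_bigr => p _; ring.
Qed.

Section SubHopf.
Context {X A : H -> Prop} (hX : sub_hopf cm S Sinv X) (hA : sub_hopf cm S Sinv A).
Local Notation U := (inHXA cm sigma X A).

Lemma inHXA_linear {f} : U f -> linear_form f.
Proof.
case=> l [_ e] a u v; rewrite !e.
have Lsum : linear_form (fun h => \sum_(p <- l) conv cm (lfun sigma p.1) (rfun sigma p.2) h).
  by apply: (linear_sum_fun (W:=k^o)) => p; linearity.
exact: Lsum.
Qed.

Lemma eq_inHXA f g : f =1 g -> U f -> U g.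
Proof. by move=> e' [l [Hl e]]; exists l; split=> // h; rewrite -e' e. Qed.

Lemma inHXA_sum I (s : seq I) (F : I -> H -> k) :
  (forall i, List.In i s -> U (F i)) -> U (fun h => \sum_(i <- s) F i h).
Proof.
elim: s => [|x s IH] UF; first by exists [::]; split=> // h; rewrite !big_nil.
have [l1 [H1 e1]] := UF x (or_introl erefl).
have [l2 [H2 e2]] := IH (fun i Hi => UF i (or_intror Hi)).
exists (l1 ++ l2); split=> [p Hp|h]; last by rewrite big_cons big_cat e1 e2.
by case: (List.in_app_or _ _ _ Hp); [apply: H1|apply: H2].
Qed.

Lemma inHXA_scale c f : U f -> U (fun h => c * f h).
Proof.
case=> l [Hl e]; exists [seq (c *: p.1, p.2) | p <- l]; split.
  move=> p /List.in_map_iff [q [<- Hq]] /=; have [? ?] := Hl q Hq; split=> //.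
  by rewrite -[c *: _]addr0; apply: hX.(sh_lin) => //; exact: sub_hopf0.
move=> h; rewrite e big_map mulr_sumr; apply: eq_bigr => p _ /=.
rewrite !convE mulr_swr; apply: eq_sws => a b.
have sZ : sigma a (c *: p.1) = c * sigma a p.1.
  exact: (linear_mapZ (W:=k^o) (rfun sigma a) c p.1 (linear_form_rfun _ a hsig.(cqt_bilin))).
by rewrite /lfun sZ mulrA.
Qed.

Lemma inHXA_conv_lfun_rfun x a : X x -> A a -> U (conv cm (lfun sigma x) (rfun sigma a)).
Proof.
move=> Xx Aa; exists [:: (x, a)]; split; first by move=> p [<-|[]].
by move=> h; rewrite big_cons big_nil addr0.
Qed.

Lemma inHXA_sw {P} (hP : sub_hopf cm S Sinv P) z (F : H -> H -> H -> k) : P z ->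
  (forall h, bilinf (F h)) -> (forall z1 z2, P z1 -> P z2 -> U (fun h => F h z1 z2)) ->
  U (fun h => sws z (F h)).
Proof.
move=> Pz BF UF; have [sz [Psz ez]] := hP.(sh_cm) Pz.
apply: (@eq_inHXA (fun h => \sum_(p <- sz) F h p.1 p.2)) => [h|].
  exact: (@sw_rep k^o _ _ _ ez (BF h)).
by apply: inHXA_sum => p /Psz [? ?]; apply: UF.
Qed.

Lemma inHXA_lfun_conv x f : X x -> U f -> U (conv cm (lfun sigma x) f).
Proof.
move=> Xx Uf; have Lf := inHXA_linear Uf; case: Uf => l [Hl e].
apply: (@eq_inHXA (fun h => \sum_(p <- l) conv cm (lfun sigma (p.1 * x)) (rfun sigma p.2) h)).
  move=> h; rewrite (eq_conv _ _ _ _ h (frefl _) e) conv_sumr.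
  apply: eq_bigr => p _; rewrite -convA; [|by linearity..].
  by apply: eq_conv => // w; rewrite lfunM.
apply: inHXA_sum => p /Hl [? ?]; apply: inHXA_conv_lfun_rfun => //.
exact: hX.(sh_mul).
Qed.

Lemma inHXA_conv_rfun_lfun a z : A a -> X z -> U (conv cm (rfun sigma a) (lfun sigma z)).
Proof.
move=> Aa Xz; apply: eq_inHXA (fun h => esym (conv_rfun_lfun a z h)) _.
apply: (inHXA_sw hX) => // [h|z1 z' Xz1 Xz']; first by linearity.
apply: (inHXA_sw hX) => // [h|z2 z3 Xz2 Xz3]; first by linearity.
apply: (inHXA_sw hA) => // [h|a1 a' Aa1 Aa']; first by linearity.
apply: (inHXA_sw hA) => // [h|a21 a22 Aa21 Aa22]; first by linearity.
exact/inHXA_scale/inHXA_conv_lfun_rfun.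
Qed.

Lemma inHXA_conv_lfun f z : U f -> X z -> U (conv cm f (lfun sigma z)).
Proof.
move=> Uf Xz; have Lf := inHXA_linear Uf; case: Uf => l [Hl e].
apply: (@eq_inHXA (fun h => \sum_(p <- l)
    conv cm (lfun sigma p.1) (conv cm (rfun sigma p.2) (lfun sigma z)) h)).
  move=> h; rewrite (eq_conv _ _ _ _ h e (frefl _)) conv_suml.
  by apply: eq_bigr => p _; rewrite convA //; linearity.
apply: inHXA_sum => p /Hl [? ?]; apply: inHXA_lfun_conv => //.
exact: inHXA_conv_rfun_lfun.
Qed.

Local Notation D := (inD cm sigma X A).
Local Notation pi := (piD cm sigma Sinv).

Lemma eq_big_In I (s : seq I) (F G : I -> k) :
  (forall i, List.In i s -> F i = G i) -> \sum_(i <- s) F i = \sum_(i <- s) G i.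
Proof.
elim: s => [|x s IH] e; first by rewrite !big_nil.
by rewrite !big_cons e ?IH //; [move=> i Hi; apply: e; right|left].
Qed.

Lemma piD1 p h : pi [:: p] h = conv cm p.1 (lfun sigma (Sinv p.2)) h.
Proof. by rewrite /piD big_cons big_nil addr0. Qed.

Lemma piD_inHXA t : D t -> U (pi t).
Proof.
move=> Dt; apply: inHXA_sum => p /Dt [Up Xp].
by apply: inHXA_conv_lfun => //; exact: hX.(sh_Sinv).
Qed.

Lemma piD_unit h : pi [:: (eps, 1)] h = eps h.
Proof.
rewrite piD1 /= Sinv1 convE (sws_counitl eps) //; first exact: hH.(eps_lin).
by move=> a b; rewrite lfun1.
Qed.

Lemma piD_section f : U f -> forall h, pi [:: (f, 1)] h = f h.
Proof.
move=> Uf h; rewrite piD1 /= Sinv1 convE (sws_counitr f) //; first exact: inHXA_linear.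
by move=> a b; rewrite lfun1 mulrC.
Qed.

Lemma piD_counit t : D t -> pi t 1 = \sum_(p <- t) p.1 1 * eps p.2.
Proof.
move=> Dt; apply: eq_big_In => p /Dt [/inHXA_linear Lp _].
rewrite convE sws1; last by linearity.
by rewrite /lfun (hsig.(cqt_unit) _).1 counit_Sinv.
Qed.

Lemma piD_mulD t t' : D t -> D t' ->
  forall h, pi (mulD cm Sinv t t') h = conv cm (pi t) (pi t') h.
Proof.
move=> Dt Dt' h; rewrite /piD /mulD big_flatten big_map conv_suml.
apply: eq_big_In => p /Dt [/inHXA_linear Lp _].
rewrite big_flatten big_map conv_sumr.
apply: eq_big_In => q /Dt' [/inHXA_linear Lq _].
by rewrite big_map; apply: conv_twist_lfun_Sinv.
Qed.

Lemma piD_deltaD dm : (forall f, U f -> dual_cm_rep U f (dm f)) ->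
  forall t, D t -> forall a b,
  \sum_(u <- deltaD cm dm t) pi [:: u.2] a * pi [:: u.1] b = pi t (a * b).
Proof.
move=> Hdm t Dt a b; rewrite /deltaD big_flatten big_map [RHS]/piD.
apply: eq_big_In => p /Dt [Up _]; rewrite big_allpairs_dep /=.
have Lp := inHXA_linear Up; have [dmU dmE] := Hdm _ Up.
transitivity (\sum_(r <- dm p.1) sws (Sinv p.2) (fun w1 w2 =>
    conv cm r.1 (lfun sigma w1) a * conv cm r.2 (lfun sigma w2) b)).
  apply: eq_big_In => r /dmU [/inHXA_linear L1 /inHXA_linear L2].
  rewrite sws_Sinv; last by linearity.
  by apply: eq_bigr => q _; rewrite !piD1.
rewrite convE sws_mul; last by linearity.
under eq_sws => a1 a2 do under eq_sws => b1 b2 do rewrite dmE /lfun hsig.(cqt_mull).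
rewrite /sw.
transitivity (\sum_(r <- dm p.1) \sum_(q <- cm (Sinv p.2)) \sum_(x <- cm a) \sum_(y <- cm b)
   (r.1 x.1 * sigma x.2 q.1 * (r.2 y.1 * sigma y.2 q.2))).
  apply: eq_bigr => r _; apply: eq_bigr => q _; rewrite mulr_suml; apply: eq_bigr => x _.
  by rewrite mulr_sumr.
symmetry.
under eq_bigr => x _ do under eq_bigr => y _ do rewrite mulr_suml.
under eq_bigr => x _ do under eq_bigr => y _ do under eq_bigr => r _ do rewrite mulr_sumr.
under eq_bigr => x _ do rewrite exchange_big.
under eq_bigr => x _ do under eq_bigr => r _ do rewrite exchange_big.
rewrite exchange_big.
under eq_bigr => r _ do rewrite exchange_big.
apply: eq_bigr => r _; apply: eq_bigr => q _; apply: eq_bigr => x _; apply: eq_bigr => y _.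
ring.
Qed.
End SubHopf.
End Coquasitriangular.
End HopfAlgebra.

Theorem proposition1p5 (k : fieldType) (H : algType k)
    (cm : H -> seq (H * H)) (eps : H -> k) (S Sinv : H -> H)
    (hH : is_hopf cm eps S) (hSK : cancel S Sinv) (hSKV : cancel Sinv S)
    (sigma : H -> H -> k) (hsig : is_cqt cm eps sigma)
    (X A : H -> Prop) (hX : sub_hopf cm S Sinv X) (hA : sub_hopf cm S Sinv A) :
  let U := inHXA cm sigma X A in
  let D := inD cm sigma X A in
  let pi := piD cm sigma Sinv in
  (forall t, D t -> U (pi t)) /\
  (forall h, pi [:: (eps, 1)] h = eps h) /\
  (forall t t', D t -> D t' ->
     forall h, pi (mulD cm Sinv t t') h = conv cm (pi t) (pi t') h) /\
  (forall dm : (H -> k) -> seq ((H -> k) * (H -> k)),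
     (forall f, U f -> dual_cm_rep U f (dm f)) ->
     forall t, D t -> forall a b,
       \sum_(u <- deltaD cm dm t) pi [:: u.2] a * pi [:: u.1] b = pi t (a * b)) /\
  (forall t, D t -> pi t 1 = \sum_(p <- t) p.1 1 * eps p.2) /\
  (forall f, U f -> forall h, pi [:: (f, 1)] h = f h).
Proof.
move=> U D pi.
split; [|split; [|split; [|split; [|split]]]].
- exact: (piD_inHXA hH hsig hX hA).
- exact: (piD_unit hH hSK hsig).
- exact: (piD_mulD hH hSK hSKV hsig).
- exact: (piD_deltaD hH hSK hSKV hsig).
- exact: (piD_counit hH hSKV hsig).
- exact: (piD_section hH hSK hsig).
Qed.
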